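(* Let $n\ge1$ and let $H\subseteq Q_n$ be any set of more than $2^{n-1}$ vertices. Then the subgraph of $Q_n$ induced on $H$ has a vertex of degree at least $\sqrt{n}$; that is, there exists $\beta\in H$ such that $\#\{\gamma\in H:\gamma\text{ and }\beta\text{ differ in exactly one coordinate}\}\ge\sqrt{n}$.
   Context: $Q_n=\{0,1\}^n$ is the boolean cube, viewed as a graph in which two vertices are adjacent iff they differ in exactly one coordinate. *)

From mathcomp Require Import all_boot.
Set Implicit Arguments. Unset Strict Implicit. Unset Printing Implicit Defensive.

Definition cube (n : nat) := {ffun 'I_n -> bool}.

Definition cube_adj (n : nat) (x y : cube n) : bool :=
  #|[set i : 'I_n | x i != y i]| == 1.

Definition ind_deg (n : nat) (H : {set cube n}) (b : cube n) : nat :=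
  #|[set g in H | cube_adj b g]|.

From mathcomp Require Import all_boot.
From HB Require Import structures.
From mathcomp Require Import all_order all_algebra.
From mathcomp Require Import ring zify realalg.
Set Implicit Arguments. Unset Strict Implicit. Unset Printing Implicit Defensive.
Import Order.TTheory GRing.Theory Num.Theory.

(* Huang's argument.  Signing the edges of Q_n so that every square carries an
   odd number of minus signs gives a signed adjacency operator A with
   A^2 = n.  Counting dimensions, some nonzero u vanishes on the half-cube
   {x_top = 1} and has (A + sqrt n) u = 0 outside H; then v := (A + sqrt n) u
   is a nonzero sqrt n-eigenvector of A supported on H.  At a vertex b where
   |v| is maximal, sqrt n |v b| = |(A v) b| <= deg_H(b) |v b|. *)

Local Open Scope ring_scope.

Definition flip n (x : cube n) (i : 'I_n) : cube n :=
  [ffun j => if j == i then ~~ x j else x j].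

Lemma flipE n (x : cube n) i j : flip x i j = if j == i then ~~ x j else x j.
Proof. by rewrite ffunE. Qed.

Lemma flipK n (i : 'I_n) : involutive (fun x : cube n => flip x i).
Proof.
by move=> x; apply/ffunP=> j; rewrite !flipE; case: eqP => // _; rewrite negbK.
Qed.

Lemma flip_inj n (x : cube n) : injective (flip x).
Proof. by move=> i j /ffunP /(_ i); rewrite !flipE eqxx; case: eqP => // _; case: (x i). Qed.

Lemma flipC n (x : cube n) i j : flip (flip x i) j = flip (flip x j) i.
Proof. by apply/ffunP=> k; rewrite !flipE; do 2 case: eqP. Qed.

Lemma cube_adj_flip n (x : cube n) i : cube_adj x (flip x i).
Proof.
rewrite /cube_adj (_ : [set j | x j != flip x i j] = [set i]) ?cards1 //.
apply/setP=> j; rewrite !inE flipE; case: (eqVneq j i) => [->|_]; last by rewrite eqxx.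
by case: (x i).
Qed.

Lemma cube_adjP n (x y : cube n) : cube_adj x y -> exists i, y = flip x i.
Proof.
move=> /cards1P [i /setP Hi]; exists i; apply/ffunP=> j; rewrite flipE.
move: (Hi j); rewrite !inE; case: (eqVneq j i) => [->|_].
  by case: (x i); case: (y i).
by move/negbT; rewrite negbK => /eqP.
Qed.

Lemma ind_deg_flip n (H : {set cube n}) b :
  ind_deg H b = #|[set i | flip b i \in H]|.
Proof.
rewrite /ind_deg -(card_imset _ (@flip_inj n b)).
suff -> : [set g in H | cube_adj b g] = flip b @: [set i | flip b i \in H] by [].
apply/setP=> g; rewrite !inE; apply/andP/imsetP.
  by case=> gH /cube_adjP [i gE]; exists i; rewrite // inE -gE.
by case=> i; rewrite inE => Hi ->; split; last exact: cube_adj_flip.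
Qed.

Lemma card_cube_half n (top : 'I_n) : (#|[set x : cube n | x top]| * 2 = 2 ^ n)%N.
Proof.
have := cardsC [set x : cube n | x top]; rewrite card_ffun card_bool card_ord => <-.
rewrite muln2 -addnn; congr addn.
have -> : ~: [set x : cube n | x top] = (fun x : cube n => flip x top) @: [set x : cube n | x top].
  apply/setP=> x; rewrite !inE; apply/idP/imsetP.
    by move=> xt; exists (flip x top); rewrite ?flipK // inE flipE eqxx.
  by case=> y; rewrite inE => yt ->; rewrite flipE eqxx yt.
by rewrite card_imset //; apply: can_inj (flipK top).
Qed.

Section SignedAdjacency.
Variable R : numFieldType.

(* Around a square of directions i < j, the two paths differ in sign exactly
   by the flip of coordinate i, so every square is anticommuting. *)
Definition edge_sign n (x : cube n) (i : 'I_n) : R :=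
  (-1) ^+ (\sum_(k < n | k < i) x k)%N.

Lemma edge_sign_flip_ge n (x : cube n) (i j : 'I_n) :
  (j <= i)%N -> edge_sign (flip x i) j = edge_sign x j.
Proof.
move=> ji; congr (_ ^+ _); apply: eq_bigr => k kj; rewrite flipE.
by case: (eqVneq k i) => // ki; move: kj; rewrite ki ltnNge ji.
Qed.

Lemma edge_sign_flip_lt n (x : cube n) (i j : 'I_n) :
  (i < j)%N -> edge_sign (flip x i) j = - edge_sign x j.
Proof.
move=> ij; rewrite /edge_sign (bigD1 i) //= [in RHS](bigD1 i) //= flipE eqxx.
have -> : (\sum_(k < n | (k < j)%N && (k != i)) flip x i k =
           \sum_(k < n | (k < j)%N && (k != i)) x k)%N.
  by apply: eq_bigr => k /andP [_ /negbTE ki]; rewrite flipE ki.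
by case: (x i); rewrite !exprD ?expr1 ?expr0 ?mulN1r ?mul1r ?opprK.
Qed.

Lemma edge_sign_sqr n (x : cube n) i : edge_sign x i * edge_sign x i = 1.
Proof. by rewrite -expr2 -exprM mulnC exprM sqrrN !expr1n. Qed.

Definition signed_adj n (v : cube n -> R) (x : cube n) : R :=
  \sum_i edge_sign x i * v (flip x i).

Lemma eq_signed_adj n (v w : cube n -> R) : v =1 w -> signed_adj v =1 signed_adj w.
Proof. by move=> vw x; apply: eq_bigr => i _; rewrite vw. Qed.

Lemma signed_adjDZ n a (v w : cube n -> R) x :
  signed_adj (fun y => a * v y + w y) x = a * signed_adj v x + signed_adj w x.
Proof. by rewrite mulr_sumr -big_split; apply: eq_bigr => i _ /=; ring. Qed.

Lemma sum_antisym n (G : 'I_n -> 'I_n -> R) :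
  (forall i j, G j i = - G i j) -> \sum_i \sum_j G i j = 0.
Proof.
move=> GN; set S := \sum_i _; suff /eqP : S = - S.
  by rewrite -addr_eq0 -mulr2n mulrn_eq0 => /eqP.
rewrite {1}/S exchange_big -sumrN; apply: eq_bigr => j _.
by rewrite -sumrN; apply: eq_bigr => i _.
Qed.

Lemma signed_adj_sqr n (v : cube n -> R) x :
  signed_adj (signed_adj v) x = n%:R * v x.
Proof.
rewrite /signed_adj; under eq_bigr => i _ do rewrite mulr_sumr.
pose F i j := edge_sign x i * (edge_sign (flip x i) j * v (flip (flip x i) j)).
pose G i j := if j == i then 0 else F i j.
have sumF i : \sum_j F i j = v x + \sum_j G i j.
  rewrite (bigD1 i) //= [X in _ = _ + X](bigD1 i) //= /G eqxx add0r; congr (_ + _).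
    by rewrite /F flipK edge_sign_flip_ge // mulrA edge_sign_sqr mul1r.
  by apply: eq_bigr => j /negbTE ->.
rewrite (eq_bigr _ (fun i _ => sumF i)) big_split /= sum_antisym ?addr0.
  by rewrite sumr_const card_ord mulr_natl.
move=> i j; rewrite /G eq_sym; case: eqP => [eji|ij]; first by subst j; rewrite oppr0.
rewrite /F flipC; case: (ltngtP i j) => [lt_ij|lt_ji|/val_inj eij].
- by rewrite (edge_sign_flip_lt x lt_ij) (edge_sign_flip_ge x (ltnW lt_ij)); ring.
- by rewrite (edge_sign_flip_lt x lt_ji) (edge_sign_flip_ge x (ltnW lt_ji)); ring.
- by case: ij; rewrite eij.
Qed.

End SignedAdjacency.

Lemma lker_nontrivial (K : fieldType) (U V : vectType K) (f : 'Hom(U, V)) :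
  (\dim {:V} < \dim {:U})%N -> exists2 u : U, u != 0 & f u = 0.
Proof.
move=> dimVU; have := limg_ker_dim f fullv; rewrite capfv => dim_sum.
have dim_img : (\dim (limg f) <= \dim {:V})%N by apply/dimvS/subvf.
have ker_pos : (0 < \dim (lker f))%N by lia.
exists (vpick (lker f)); first by rewrite vpick0 -dimv_eq0 -lt0n.
by apply/eqP; rewrite -memv_ker memv_pick.
Qed.

Lemma dim_ffun_regular (K : fieldType) (I : finType) : dim {ffun I -> K^o} = #|I|.
Proof. by rewrite /dim /= muln1. Qed.

Section Constraints.
Variables (R : numFieldType) (n : nat) (H : {set cube n}) (top : 'I_n) (lam : R).

Definition off_H := {x : cube n | x \notin H}.
Definition top_half := {x : cube n | x top}.

Definition constraint_space := ({ffun off_H -> R^o} * {ffun top_half -> R^o})%type.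

Definition constraints (u : {ffun cube n -> R^o}) : constraint_space :=
  ([ffun s : off_H => signed_adj u (val s) + lam * u (val s)],
   [ffun s : top_half => u (val s)]).

Lemma constraints_is_linear : linear constraints.
Proof.
move=> a u w; congr pair; apply/ffunP => s; rewrite !ffunE //=.
rewrite (@eq_signed_adj _ _ _ (fun y => a * u y + w y)) => [|y]; last by rewrite !ffunE.
by rewrite signed_adjDZ -[a *: _]/(a * _) -[a *: (_ + _)]/(a * (_ + _)); ring.
Qed.

HB.instance Definition _ :=
  GRing.isLinear.Build R _ _ _ constraints constraints_is_linear.

Lemma dim_cube_fun : \dim {:{ffun cube n -> R^o}} = (2 ^ n)%N.
Proof. by rewrite dimvf dim_ffun_regular card_ffun card_bool card_ord. Qed.

Lemma dim_constraints :
  \dim {:constraint_space} = (2 ^ n - #|H| + #|[set x : cube n | x top]|)%N.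
Proof.
rewrite dimvf -[dim _]/(dim {ffun off_H -> R^o} + dim {ffun top_half -> R^o})%N.
rewrite !dim_ffun_regular; congr addn.
  have := cardC H; rewrite card_ffun card_bool card_ord => <-.
  by rewrite card_sig addKn; apply: eq_card => x; rewrite !inE.
by rewrite card_sig; apply: eq_card => x; rewrite !inE.
Qed.

Lemma exists_constrained_fun :
  (2 ^ n < #|H| * 2)%N -> exists2 u, u != 0 & constraints u = 0.
Proof.
move=> hH; have [|u u0 cu] := lker_nontrivial (linfun constraints).
  by rewrite dim_constraints dim_cube_fun; have := card_cube_half top; lia.
by exists u; rewrite // -(lfunE constraints).
Qed.

End Constraints.

Lemma exists_eigenvector_on (R : numFieldType) n (H : {set cube n}) (lam : R) :
  (0 < n)%N -> lam ^+ 2 = n%:R -> (2 ^ n < #|H| * 2)%N ->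
  exists2 v : cube n -> R, exists x, v x != 0 &
    (forall x, x \notin H -> v x = 0) /\ (forall x, signed_adj v x = lam * v x).
Proof.
move=> n_gt0 lam2 hH; pose top := Ordinal n_gt0.
have [u u0 cu] := exists_constrained_fun top lam hH.
have u_offH x : x \notin H -> signed_adj u x + lam * u x = 0.
  by move=> xH; move/ffunP: (congr1 fst cu) => /(_ (exist _ x xH)); rewrite !ffunE.
have u_top (x : cube n) : x top -> u x = 0.
  by move=> xt; move/ffunP: (congr1 snd cu) => /(_ (exist _ x xt)); rewrite !ffunE.
exists (fun x => signed_adj u x + lam * u x); last split=> // x.
  have [x ux] : exists x, u x != 0.
    by apply/existsP; apply: contraR u0 => /existsPn ux0; apply/eqP/ffunP=> x;
       rewrite ffunE; apply/eqP/negPn.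
  have xt : ~~ x top by apply: contra ux => /u_top ->.
  (* every neighbour of [flip x top] but [x] lies in the top half *)
  exists (flip x top); rewrite u_top ?flipE ?eqxx // mulr0 addr0.
  rewrite /signed_adj (bigD1 top) //= flipK big1 ?addr0.
    by rewrite mulf_neq0 // signr_eq0.
  by move=> i ti; rewrite u_top ?mulr0 // !flipE eq_sym (negbTE ti) eqxx.
rewrite (@eq_signed_adj _ _ _ (fun y => lam * u y + signed_adj u y)) => [|y].
  by rewrite signed_adjDZ signed_adj_sqr -lam2; ring.
by rewrite addrC.
Qed.

Lemma eigenvector_on_ind_deg (R : realFieldType) n (H : {set cube n})
    (v : cube n -> R) (lam : R) :
  (exists x, v x != 0) -> (forall x, x \notin H -> v x = 0) ->
  (forall x, signed_adj v x = lam * v x) ->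
  exists2 b, b \in H & `|lam| <= (ind_deg H b)%:R.
Proof.
move=> [x0 vx0] v_offH v_eig.
have [b _ vb_max] := arg_maxP (i0 := x0) (P := xpredT) (fun x => `|v x|) isT.
have vb_gt0 : 0 < `|v b| by apply: lt_le_trans (vb_max x0 isT); rewrite normr_gt0.
have bH : b \in H by apply: contraLR vb_gt0 => /v_offH ->; rewrite normr0 ltxx.
exists b => //; rewrite -(ler_pM2r vb_gt0) -normrM -v_eig ind_deg_flip.
apply: le_trans (ler_norm_sum _ _ _) _.
rewrite (bigID (fun i => flip b i \in H)) /= [X in _ + X]big1 ?addr0 => [|i iH]; last first.
  by rewrite v_offH ?mulr0 ?normr0.
have -> : #|[set i | flip b i \in H]|%:R * `|v b| = \sum_(i | flip b i \in H) `|v b|.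
  by rewrite sumr_const mulr_natl; congr (_ *+ _); apply: eq_card => i; rewrite inE.
by apply: ler_sum => i _; rewrite normrM normr_sign mul1r; exact: vb_max.
Qed.

Local Close Scope ring_scope.

Theorem mainTheorem3 (n : nat) (hn : 1 <= n) (H : {set cube n})
    (hH : 2 ^ n.-1 < #|H|) :
  exists2 b, b \in H & n <= (ind_deg H b) ^ 2.
Proof.
pose R := realalg; pose lam : R := Num.sqrt n%:R.
have lam2 : (lam ^+ 2 = n%:R)%R by rewrite sqr_sqrtr ?ler0n.
have hH2 : 2 ^ n < #|H| * 2 by move: hH; rewrite -(ltn_pmul2r (isT : 0 < 2)) -expnSr prednK.
have [v nz_v [v_offH v_eig]] := exists_eigenvector_on hn lam2 hH2.
have [b bH lam_le] := eigenvector_on_ind_deg nz_v v_offH v_eig.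
exists b => //; rewrite -(ler_nat R) natrX -lam2.
by rewrite ger0_norm ?sqrtr_ge0 // in lam_le; rewrite lerXn2r ?nnegrE ?sqrtr_ge0.
Qed.
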